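(* Let $I_i=[t_i,t_{i+1}]$ with $t_i<t_{i+1}$, let $p\in\mathbb{N}$, and let $\phi_L,\phi,\phi_R:I_i\to\mathbb{R}$ be polynomials of degree at most $p$. Let $m\in\mathbb{N}\cdot p$ (a positive integer multiple of $p$). If $\phi_L(t)\le\phi(t)\le\phi_R(t)$ for all $t\in\mathcal{T}_{i,m}$ and $\sup_{t\in I_i}\{\phi_R(t)-\phi_L(t)\}\le C_{box}$, then for all $t\in I_i$, \[ \phi(t)\ge\phi_L(t)-\frac{\pi^2C_{box}}{8}\sqrt{p}\Big(\frac pm\Big)^2,\qquad \phi(t)\le\phi_R(t)+\frac{\pi^2C_{box}}{8}\sqrt{p}\Big(\frac pm\Big)^2. \]
   Context: $\mathcal{T}_{i,m}$ is the set of Chebyshev–Gauss–Lobatto points of degree $m$ on $I_i$: the images of $\tau_k=-\cos(k\pi/m)$, $k=0,\dots,m$, under the increasing affine map $[-1,1]\to I_i$. $C_{box}$ is a positive constant. *)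

From mathcomp Require Import all_boot all_order all_algebra.
From mathcomp Require Import all_classical all_reals all_analysis.
Set Implicit Arguments. Unset Strict Implicit. Unset Printing Implicit Defensive.
Import Order.TTheory GRing.Theory Num.Theory.
Local Open Scope ring_scope.

Definition cheb_tau (R : realType) (m k : nat) : R :=
  - cos (k%:R * pi / m%:R).

Definition cgl_node (R : realType) (a b : R) (m k : nat) : R :=
  a + (b - a) * (cheb_tau R m k + 1) / 2.

From mathcomp Require Import all_boot all_order all_algebra.
From mathcomp Require Import all_classical all_reals all_analysis.
From mathcomp Require Import ring lra.
Set Implicit Arguments. Unset Strict Implicit. Unset Printing Implicit Defensive.
Import Order.TTheory GRing.Theory Num.Theory.
Import numFieldNormedType.Exports.
Local Open Scope ring_scope.
Local Open Scope classical_set_scope.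

(* Under the substitution t = c0 + c1 cos th, which maps [0, pi] onto [ti, ti1] and
   the angles k pi / m onto the nodes T_{i,m}, psi = phi - phiL becomes a cosine
   polynomial g th = a_0 + ... + a_p cos (p th).  It is >= 0 at the fine angles
   k pi / m and lies in [0, Cbox] at the coarse angles l pi / p (a subset, as p
   divides m).  The cos (j th) are orthogonal for the trapezoidal rule on the coarse
   angles, which bounds a_1^2 + ... + a_p^2 by Cbox^2 / 2; Cauchy-Schwarz then gives
   |a_1| + ... + |a_p| <= sqrt p Cbox, hence g'' <= p^2 sqrt p Cbox.  A function that
   is >= 0 at both ends of an interval of length h = pi / m and has g'' <= M is
   >= - M h^2 / 8 on it.  The upper bound is the same argument for phiR - phi. *)

Lemma sqr_sum_le (R : realFieldType) n (u : nat -> R) :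
  (\sum_(j < n) u j) ^+ 2 <= n%:R * \sum_(j < n) u j ^+ 2.
Proof.
elim: n => [|n IH]; first by rewrite !big_ord0 mul0r expr2 mulr0.
have [->|n0] := posnP n; first by rewrite !big_ord1 mul1r.
rewrite !big_ord_recr /= -natr1.
set S := \sum_(j < n) u j in IH *; set Q := \sum_(j < n) u j ^+ 2 in IH *.
have nR : (0 : R) < n%:R by rewrite ltr0n.
rewrite -(ler_pM2l nR); have := sqr_ge0 (n%:R * u n - S); nra.
Qed.

Lemma grid_cell (R : realDomainType) (h x : R) (m : nat) : 0 <= x <= m.+1%:R * h ->
  exists2 k, (k <= m)%N & k%:R * h <= x <= k.+1%:R * h.
Proof.
elim: m => [|m IH] /andP[x0 xm]; first by exists 0%N; rewrite // mul0r x0.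
have [xle|xgt] := leP x (m.+1%:R * h).
  by have [k km hk] := IH (introT andP (conj x0 xle)); exists k => //; rewrite ltnW.
by exists m.+1 => //; rewrite xm ltW.
Qed.

Section Trapezoid.
Variable R : realFieldType.

Definition trapezoid (p : nat) (F : nat -> R) : R := \sum_(l < p) (F l + F l.+1) / 2.

Lemma trapezoidD p F G :
  trapezoid p (fun l => F l + G l) = trapezoid p F + trapezoid p G.
Proof. by rewrite /trapezoid -big_split /=; apply: eq_bigr => l _; ring. Qed.

Lemma trapezoidZ p c F : trapezoid p (fun l => c * F l) = c * trapezoid p F.
Proof. by rewrite /trapezoid mulr_sumr; apply: eq_bigr => l _; ring. Qed.

Lemma trapezoid_sum p n (F : 'I_n -> nat -> R) :
  trapezoid p (fun l => \sum_(i < n) F i l) = \sum_(i < n) trapezoid p (F i).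
Proof.
rewrite /trapezoid exchange_big; apply: eq_bigr => l _.
by rewrite -mulr_suml big_split.
Qed.

Lemma trapezoid_cst p c : trapezoid p (fun=> c) = p%:R * c.
Proof.
rewrite /trapezoid; have -> : (c + c) / 2 = c by rewrite mulrDl -splitr.
by rewrite sumr_const card_ord mulr_natl.
Qed.

Lemma ler_trapezoid p F G :
  (forall l, (l <= p)%N -> F l <= G l) -> trapezoid p F <= trapezoid p G.
Proof.
move=> FG; apply: ler_sum => l _.
by rewrite ler_pM2r // lerD // FG // ltnW.
Qed.

End Trapezoid.

Section Curvature.
Variable R : realType.

Lemma concave_ge0 (f f' f'' : R -> R) (a b : R) :
  (forall x : R, is_derive x 1 f (f' x)) -> (forall x : R, is_derive x 1 f' (f'' x)) ->
  (forall x, f'' x <= 0) -> 0 <= f a -> 0 <= f b ->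
  forall x, a <= x <= b -> 0 <= f x.
Proof.
move=> df df' f''le0 fa fb x /andP[ax xb]; rewrite leNgt; apply/negP => fx.
have cont (g g' : R -> R) (u v : R) :
    (forall y : R, is_derive y 1 g (g' y)) -> {within `[u, v], continuous g}.
  by move=> dg; apply: derivable_within_continuous => y _; apply: ex_derive.
have ax' : a < x by rewrite lt_neqAle ax andbT; apply: contraTneq fx => <-; rewrite -leNgt.
have xb' : x < b by rewrite lt_neqAle xb andbT; apply: contraTneq fx => ->; rewrite -leNgt.
(* By the MVT, f' < 0 left of x and f' > 0 right of x, so f'' > 0 in between. *)
have [c1 /[!in_itv]/= /andP[_ c1x] E1] := MVT ax' (fun y _ => df y) (cont _ _ _ _ df).
have [c2 /[!in_itv]/= /andP[xc2 _] E2] := MVT xb' (fun y _ => df y) (cont _ _ _ _ df).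
have [c3 _ E3] := MVT (lt_trans c1x xc2) (fun y _ => df' y) (cont _ _ _ _ df').
have f'c1 : f' c1 < 0 by nra.
have f'c2 : 0 < f' c2 by nra.
have := f''le0 c3; nra.
Qed.

Lemma curvature_lower_bound (f f' f'' : R -> R) (M lo hi : R) :
  (forall x : R, is_derive x 1 f (f' x)) -> (forall x : R, is_derive x 1 f' (f'' x)) ->
  0 <= M -> (forall x, f'' x <= M) -> 0 <= f lo -> 0 <= f hi ->
  forall x, lo <= x <= hi -> - (M * (hi - lo) ^+ 2 / 8) <= f x.
Proof.
move=> df df' M0 f''M flo fhi x xlohi.
(* Adding Q makes f concave while keeping its values at lo and hi. *)
pose Q : {poly R} := M / 2 *: (('X - lo%:P) * (hi%:P - 'X)).
have QE t : Q.[t] = M / 2 * ((t - lo) * (hi - t)) by rewrite !hornerE.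
have Q''E t : (deriv (deriv Q)).[t] = - M by rewrite !poly.derivE /= !hornerE /=; lra.
have : 0 <= f x + Q.[x].
  apply: (@concave_ge0 (f + horner Q) (f' + horner (deriv Q))
    (f'' + horner (deriv (deriv Q))) lo hi) => //.
  - by move=> t; rewrite !fctE Q''E subr_le0.
  - by rewrite !fctE QE subrr mul0r mulr0 addr0.
  - by rewrite !fctE QE subrr mulr0 mulr0 addr0.
rewrite QE; case/andP: xlohi => h1 h2.
have := sqr_ge0 (x - (lo + hi) / 2); nra.
Qed.

End Curvature.

Section CosinePolynomials.
Variable R : realType.

Lemma trapezoid_cos p (x : R) :
  sin (x / 2) * trapezoid p (fun l => cos (l%:R * x)) = cos (x / 2) * sin (p%:R * x) / 2.
Proof.
set h := x / 2; have xE : x = h + h by rewrite /h -splitr.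
have step (v : R) : sin h * ((cos (v - h) + cos (v + h)) / 2) =
    cos h / 2 * (sin (v + h) - sin (v - h)).
  by rewrite cosB cosD sinD sinB; ring.
have stepl l : sin h * ((cos (l%:R * x) + cos (l.+1%:R * x)) / 2) =
    cos h / 2 * (sin (l.+1%:R * x) - sin (l%:R * x)).
  have -> : l.+1%:R * x = l%:R * x + h + h by rewrite -natr1 mulrDl mul1r {2}xE addrA.
  by rewrite -{1 4}[l%:R * x](addrK h) step.
rewrite /trapezoid mulr_sumr; under eq_bigr do rewrite stepl.
rewrite -mulr_sumr -(big_mkord xpredT (fun l => sin (l.+1%:R * x) - sin (l%:R * x))).
by rewrite telescope_sumr // mul0r sin0 subr0 mulrAC.
Qed.

Lemma sin_pi_natmul (r : nat) : sin (pi *+ r) = 0 :> R.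
Proof. by rewrite -[pi *+ r]add0r (alternatingn (@sinDpi R)) sin0 mulr0. Qed.

Definition cosnode (p r l : nat) : R := cos (r%:R * (l%:R * pi / p%:R)).

Lemma trapezoid_cosnode_eq0 p r : (0 < r < p.*2)%N -> trapezoid p (cosnode p r) = 0.
Proof.
case/andP => r0 rp; have p0 : (0 < p)%N by case: p rp.
have pR : p%:R != 0 :> R by rewrite pnatr_eq0 -lt0n.
set x : R := r%:R * pi / p%:R.
have -> : cosnode p r = fun l => cos (l%:R * x).
  by apply/funext => l; rewrite /cosnode /x; congr cos; ring.
have sx0 : sin (x / 2) != 0.
  have -> : x / 2 = r%:R / (p.*2)%:R * pi by rewrite /x -muln2 natrM; field.
  apply/lt0r_neq0/sin_gt0_pi.
  rewrite pmulr_lgt0 ?gtr_pMl ?pi_gt0 ?divr_gt0 ?ltr0n ?double_gt0 //.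
  by rewrite ltr_pdivrMr ?ltr0n ?double_gt0 // mul1r ltr_nat.
apply: (mulfI sx0); rewrite trapezoid_cos mulr0.
have -> : p%:R * x = pi *+ r by rewrite /x mulrC divfK // mulr_natl.
by rewrite sin_pi_natmul mulr0 mul0r.
Qed.

Lemma trapezoid_cosnode_ge0 p r : (r <= p.*2)%N -> 0 <= trapezoid p (cosnode p r).
Proof.
move=> rp; have [->|r0] := posnP r.
  have -> : cosnode p 0 = fun=> 1 by apply/funext => l; rewrite /cosnode mul0r cos0.
  by rewrite trapezoid_cst mulr1.
have [rE|rne] := eqVneq r p.*2; last first.
  by rewrite trapezoid_cosnode_eq0 // r0 ltn_neqAle rne.
have p0 : p%:R != 0 :> R by rewrite pnatr_eq0 -double_eq0 -rE -lt0n.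
have -> : cosnode p r = fun=> 1.
  apply/funext => l; rewrite /cosnode rE -muln2 natrM mulrC !mulrA divfK //.
  by rewrite -mulrA mulr_natl mulr_natr -[_ *+ l]add0r (periodicn (@cosD2pi R)) cos0.
by rewrite trapezoid_cst mulr1.
Qed.

Lemma cosnodeM p i j l : (i <= j)%N ->
  cosnode p i l * cosnode p j l = 2^-1 * (cosnode p (j + i) l + cosnode p (j - i) l).
Proof.
move=> ij; rewrite /cosnode natrD natrB //; set x : R := l%:R * pi / p%:R.
by rewrite [(_ + _) * _]mulrDl [(_ - _) * _]mulrBl cosD cosB; lra.
Qed.

Lemma trapezoid_cosnodeM_eq0 p i j : (i <= p)%N -> (j <= p)%N -> i != j ->
  trapezoid p (fun l => cosnode p i l * cosnode p j l) = 0.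
Proof.
have orth i' j' : (i' < j' <= p)%N ->
    trapezoid p (fun l => cosnode p i' l * cosnode p j' l) = 0.
  case/andP=> ij jp.
  have j0 : (0 < j')%N by apply: leq_ltn_trans ij.
  have ji2p : (j' + i' < p.*2)%N by rewrite -addnn -addnS leq_add // (leq_trans ij jp).
  have -> : (fun l => cosnode p i' l * cosnode p j' l) =
      fun l => 2^-1 * (cosnode p (j' + i') l + cosnode p (j' - i') l).
    by apply/funext => l; rewrite cosnodeM // ltnW.
  rewrite trapezoidZ trapezoidD !trapezoid_cosnode_eq0 ?addr0 ?mulr0 ?ltn_addr ?subn_gt0 //.
  by rewrite ij (leq_ltn_trans (leq_subr _ _) (leq_ltn_trans (leq_addr _ _) ji2p)).
move=> ip jp; rewrite neq_ltn => /orP[ij|ji]; first by rewrite orth // ij jp.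
have -> : (fun l => cosnode p i l * cosnode p j l) = fun l => cosnode p j l * cosnode p i l.
  by apply/funext => l; rewrite mulrC.
by rewrite orth // ji ip.
Qed.

Lemma trapezoid_cosnode_sqr p i : (i <= p)%N ->
  p%:R / 2 <= trapezoid p (fun l => cosnode p i l * cosnode p i l).
Proof.
move=> ip; have -> : (fun l => cosnode p i l * cosnode p i l) =
    fun l => 2^-1 * (cosnode p (i + i) l + 1).
  by apply/funext => l; rewrite cosnodeM // subnn /cosnode mul0r cos0.
rewrite trapezoidZ trapezoidD trapezoid_cst mulr1 mulrC ler_pM2l ?invr_gt0 // lerDr.
by apply: trapezoid_cosnode_ge0; rewrite addnn leq_double.
Qed.

Definition cospoly (n : nat) (a : nat -> R) (t : R) : R :=
  \sum_(j < n.+1) a j * cos (j%:R * t).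

Definition sinpoly (n : nat) (a : nat -> R) (t : R) : R :=
  \sum_(j < n.+1) a j * sin (j%:R * t).

Lemma is_derive_cosM (c x : R) :
  is_derive x 1 (fun t => cos (c * t)) (- sin (c * x) * c).
Proof.
have dM : is_derive x 1 ( *%R c) (c * 1) := is_deriveZ c (is_derive_id x 1).
by rewrite mulr1 in dM; exact: is_derive1_comp (is_derive_cos (c * x)) dM.
Qed.

Lemma is_derive_sinM (c x : R) :
  is_derive x 1 (fun t => sin (c * t)) (cos (c * x) * c).
Proof.
have dM : is_derive x 1 ( *%R c) (c * 1) := is_deriveZ c (is_derive_id x 1).
by rewrite mulr1 in dM; exact: is_derive1_comp (is_derive_sin (c * x)) dM.
Qed.

Lemma is_derive_cospoly n a (x : R) :
  is_derive x 1 (cospoly n a) (- sinpoly n (fun j => j%:R * a j) x).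
Proof.
have -> : cospoly n a = \sum_(j < n.+1) (fun t => a j * cos (j%:R * t)).
  by apply/funext => t; rewrite fct_sumE.
rewrite /sinpoly -sumrN; apply: is_derive_sum => j.
apply: is_derive_eq (is_deriveZ (a j) (is_derive_cosM j%:R x)) _.
by rewrite /GRing.scale /=; ring.
Qed.

Lemma is_derive_sinpoly n a (x : R) :
  is_derive x 1 (sinpoly n a) (cospoly n (fun j => j%:R * a j) x).
Proof.
have -> : sinpoly n a = \sum_(j < n.+1) (fun t => a j * sin (j%:R * t)).
  by apply/funext => t; rewrite fct_sumE.
apply: is_derive_sum => j.
apply: is_derive_eq (is_deriveZ (a j) (is_derive_sinM j%:R x)) _.
by rewrite /GRing.scale /=; ring.
Qed.

Lemma cospoly_ge_cell n a (lo hi t : R) :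
  0 <= cospoly n a lo -> 0 <= cospoly n a hi -> lo <= t <= hi ->
  - ((\sum_(j < n.+1) `|a j| * j%:R ^+ 2) * (hi - lo) ^+ 2 / 8) <= cospoly n a t.
Proof.
set M := \sum_(j < n.+1) _.
have M0 : 0 <= M by apply: sumr_ge0 => j _; rewrite mulr_ge0 ?sqr_ge0.
move=> flo fhi tlohi.
apply: (curvature_lower_bound (f'' := fun x => - cospoly n (fun j => j%:R * (j%:R * a j)) x)
  (is_derive_cospoly n a) _ M0 _ flo fhi tlohi).
- by move=> x; apply: is_deriveN; exact: is_derive_sinpoly.
- move=> x; rewrite /cospoly -sumrN; apply: ler_sum => j _.
  apply: le_trans (ler_norm _) _.
  rewrite normrN !normrM normr_nat mulrA mulrC -expr2 [_ * `|a j|]mulrC.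
  by rewrite ler_piMl ?mulr_ge0 ?sqr_ge0 ?cos_max.
Qed.

Lemma cospoly_ge_grid n a (m : nat) (t : R) : (0 < m)%N ->
  (forall k, (k <= m)%N -> 0 <= cospoly n a (k%:R * pi / m%:R)) ->
  0 <= t <= pi ->
  - ((\sum_(j < n.+1) `|a j| * j%:R ^+ 2) * (pi / m%:R) ^+ 2 / 8) <= cospoly n a t.
Proof.
case: m => // m _ ge0 t0pi.
have tm : 0 <= t <= m.+1%:R * (pi / m.+1%:R) by rewrite mulrC divfK.
have [k km /andP[lot thi]] := grid_cell tm.
have -> : pi / m.+1%:R = k.+1%:R * (pi / m.+1%:R) - k%:R * (pi / m.+1%:R) :> R.
  by rewrite -natr1; ring.
apply: cospoly_ge_cell; rewrite ?lot ?thi // mulrA; apply: ge0 => //.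
exact: leqW.
Qed.

Lemma cospoly_parseval p a (K : R) : (0 < p)%N ->
  (forall l, (l <= p)%N -> `|cospoly p a (l%:R * pi / p%:R)| <= K) ->
  \sum_(j < p.+1) a j ^+ 2 <= 2 * K ^+ 2.
Proof.
move=> p0 bdK; pose v l := cospoly p a (l%:R * pi / p%:R).
have vE l : v l = \sum_(j < p.+1) a j * cosnode p j l by [].
have up : trapezoid p (fun l => v l ^+ 2) <= p%:R * K ^+ 2.
  rewrite -trapezoid_cst; apply: ler_trapezoid => l lp.
  by rewrite -real_normK ?num_real // lerXn2r ?nnegrE ?bdK // (le_trans _ (bdK 0%N _)).
have lo : p%:R / 2 * \sum_(j < p.+1) a j ^+ 2 <= trapezoid p (fun l => v l ^+ 2).
  have -> : (fun l => v l ^+ 2) = fun l => \sum_(i < p.+1) \sum_(j < p.+1)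
      a i * a j * (cosnode p i l * cosnode p j l).
    apply/funext => l; rewrite vE expr2 mulr_suml; apply: eq_bigr => i _.
    by rewrite mulr_sumr; apply: eq_bigr => j _; ring.
  have ord_le (k : 'I_p.+1) : (k <= p)%N by rewrite -ltnS.
  rewrite trapezoid_sum mulr_sumr; apply: ler_sum => i _.
  rewrite trapezoid_sum (bigD1 i) //= big1 => [|j ji]; last first.
    by rewrite trapezoidZ trapezoid_cosnodeM_eq0 ?mulr0 ?ord_le // eq_sym.
  rewrite addr0 trapezoidZ -expr2 mulrC.
  by apply: ler_wpM2l; [exact: sqr_ge0 | exact: trapezoid_cosnode_sqr].
have pR : (0 : R) < p%:R by rewrite ltr0n.
have := le_trans lo up; nra.
Qed.

Lemma cospoly_coef_bound p a (C : R) : (0 < p)%N ->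
  (forall l, (l <= p)%N -> 0 <= cospoly p a (l%:R * pi / p%:R) <= C) ->
  \sum_(j < p) `|a j.+1| <= Num.sqrt p%:R * C.
Proof.
move=> p0 bd; have C0 : 0 <= C by have /andP[/le_trans] := bd 0%N isT; apply.
(* Shifting a_0 by C / 2 centres the coarse values in [-C / 2, C / 2]. *)
pose b j := if j == 0%N then a 0%N - C / 2 else a j.
have bE t : cospoly p b t = cospoly p a t - C / 2.
  by rewrite /cospoly !big_ord_recl /= mul0r cos0 !mulr1 addrAC.
have sum_b : \sum_(j < p.+1) b j ^+ 2 <= 2 * (C / 2) ^+ 2.
  apply: cospoly_parseval => // l lp; rewrite bE ler_norml.
  by have /andP[g0 gC] := bd l lp; apply/andP; split; lra.
have sum_a : \sum_(j < p) a j.+1 ^+ 2 <= C ^+ 2.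
  rewrite big_ord_recl /= in sum_b.
  have := sqr_ge0 (b 0%N); have := sqr_ge0 C; lra.
rewrite -(@ler_pXn2r _ 2) ?nnegrE ?sumr_ge0 ?mulr_ge0 ?sqrtr_ge0 //.
rewrite exprMn sqr_sqrtr ?ler0n //.
apply: le_trans (sqr_sum_le p (fun j => `|a j.+1|)) _.
rewrite ler_wpM2l // (eq_bigr (fun j : 'I_p => a j.+1 ^+ 2)) // => j _.
by rewrite real_normK ?num_real.
Qed.

Lemma cospoly_ge p q a (C t : R) : (0 < p)%N -> (0 < q)%N ->
  (forall k, (k <= q * p)%N -> 0 <= cospoly p a (k%:R * pi / (q * p)%:R)) ->
  (forall l, (l <= p)%N -> cospoly p a (l%:R * pi / p%:R) <= C) ->
  0 <= t <= pi ->
  - (pi ^+ 2 * C / 8 * Num.sqrt p%:R * (p%:R / (q * p)%:R) ^+ 2) <= cospoly p a t.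
Proof.
move=> p0 q0 fine coarse t0pi.
have pR : (0 : R) < p%:R by rewrite ltr0n.
have qR : (0 : R) < q%:R by rewrite ltr0n.
have coarse_node l : (l * q)%:R * pi / (q * p)%:R = l%:R * pi / p%:R :> R.
  by rewrite !natrM; field; rewrite !gt_eqF.
have curv : \sum_(j < p.+1) `|a j| * j%:R ^+ 2 <= p%:R ^+ 2 * \sum_(j < p) `|a j.+1|.
  rewrite big_ord_recl /= expr0n mulr0 add0r mulr_sumr.
  apply: ler_sum => j _; rewrite /bump /= mulrC ler_wpM2r // lerXn2r ?nnegrE ?ler0n //.
  by rewrite ler_nat.
apply: le_trans (cospoly_ge_grid (m := q * p) _ fine t0pi); last by rewrite muln_gt0 q0.
rewrite lerN2; set m := (q * p)%N.
have S_C : \sum_(j < p) `|a j.+1| <= Num.sqrt p%:R * C.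
  apply: cospoly_coef_bound => // l lp; rewrite coarse // -coarse_node fine //.
  by rewrite mulnC leq_mul2l lp orbT.
rewrite [leRHS](_ : _ = p%:R ^+ 2 * (Num.sqrt p%:R * C) * (pi / m%:R) ^+ 2 / 8).
  by rewrite ler_pM2r // ler_wpM2r ?sqr_ge0 // (le_trans curv) // ler_wpM2l ?sqr_ge0.
by rewrite /m natrM; field; rewrite !gt_eqF.
Qed.

Definition is_cospoly (n : nat) (f : R -> R) := exists a, f =1 cospoly n a.

Lemma eq_is_cospoly n (f g : R -> R) : f =1 g -> is_cospoly n f -> is_cospoly n g.
Proof. by move=> fg [a fa]; exists a => t; rewrite -fg. Qed.

Lemma is_cospolyW n n' f : (n <= n')%N -> is_cospoly n f -> is_cospoly n' f.
Proof.
move=> nn' [a fa]; exists (fun j => if (j < n.+1)%N then a j else 0) => t.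
rewrite fa /cospoly (big_ord_widen n'.+1 (fun j => a j * cos (j%:R * t))) // big_mkcond.
by apply: eq_bigr => j _; case: ifP; rewrite ?mul0r.
Qed.

Lemma is_cospolyD n f g :
  is_cospoly n f -> is_cospoly n g -> is_cospoly n (fun t => f t + g t).
Proof.
move=> [a fa] [b gb]; exists (fun j => a j + b j) => t.
by rewrite fa gb /cospoly -big_split; apply: eq_bigr => j _; rewrite mulrDl.
Qed.

Lemma is_cospolyZ n c f : is_cospoly n f -> is_cospoly n (fun t => c * f t).
Proof.
move=> [a fa]; exists (fun j => c * a j) => t.
by rewrite fa /cospoly mulr_sumr; apply: eq_bigr => j _; rewrite mulrA.
Qed.

Lemma is_cospoly_cst c : is_cospoly 0 (fun=> c).
Proof. by exists (fun=> c) => t; rewrite /cospoly big_ord1 mul0r cos0 mulr1. Qed.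

Lemma is_cospoly_cos k : is_cospoly k (fun t => cos (k%:R * t)).
Proof.
exists (fun j => (j == k)%:R) => t.
rewrite /cospoly big_ord_recr /= eqxx mul1r big1 ?add0r // => j _.
by rewrite ltn_eqF ?mul0r.
Qed.

Lemma is_cospoly_sum n m (h : 'I_m -> R -> R) :
  (forall i, is_cospoly n (h i)) -> is_cospoly n (fun t => \sum_(i < m) h i t).
Proof.
move=> hP; rewrite -fct_sumE; elim/big_ind: _ => //; last exact: is_cospolyD.
exact: is_cospolyW (leq0n n) (is_cospoly_cst 0).
Qed.

Lemma is_cospoly_cosM j : is_cospoly j.+1 (fun t => cos t * cos (j%:R * t)).
Proof.
case: j => [|j].
  by apply: eq_is_cospoly (is_cospoly_cos 1) => t; rewrite mul0r cos0 mulr1 mul1r.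
apply: (@eq_is_cospoly _ (fun t => 2^-1 * cos (j.+2%:R * t) + 2^-1 * cos (j%:R * t))).
  move=> t; have -> : j.+2%:R * t = j.+1%:R * t + t by rewrite -natr1 mulrDl mul1r.
  have -> : j%:R * t = j.+1%:R * t - t by rewrite -natr1 mulrDl mul1r addrK.
  by rewrite cosD cosB; lra.
apply: is_cospolyD; apply: is_cospolyZ; first exact: is_cospoly_cos.
exact: is_cospolyW (leqW (leqnSn j)) (is_cospoly_cos j).
Qed.

Lemma is_cospolyMcos n f : is_cospoly n f -> is_cospoly n.+1 (fun t => cos t * f t).
Proof.
move=> [a fa].
apply: (@eq_is_cospoly _ (fun t => \sum_(j < n.+1) a j * (cos t * cos (j%:R * t)))).
  by move=> t; rewrite fa /cospoly mulr_sumr; apply: eq_bigr => j _; rewrite mulrCA.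
apply: is_cospoly_sum => j; apply: is_cospolyZ.
exact: is_cospolyW (ltn_ord j) (is_cospoly_cosM j).
Qed.

Lemma is_cospoly_exp (c0 c1 : R) i : is_cospoly i (fun t => (c0 + c1 * cos t) ^+ i).
Proof.
elim: i => [|i IH]; first by apply: eq_is_cospoly (is_cospoly_cst 1) => t; rewrite expr0.
apply: (@eq_is_cospoly _
    (fun t => c0 * (c0 + c1 * cos t) ^+ i + c1 * (cos t * (c0 + c1 * cos t) ^+ i))).
  by move=> t; rewrite exprS; ring.
apply: is_cospolyD; apply: is_cospolyZ; first exact: is_cospolyW (leqnSn i) IH.
exact: is_cospolyMcos.
Qed.

Lemma is_cospoly_horner (P : {poly R}) n (c0 c1 : R) :
  (size P <= n.+1)%N -> is_cospoly n (fun t => P.[c0 + c1 * cos t]).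
Proof.
move=> sP.
apply: (@eq_is_cospoly _ (fun t => \sum_(i < n.+1) P`_i * (c0 + c1 * cos t) ^+ i)).
  by move=> t; rewrite (horner_coef_wide _ sP).
apply: is_cospoly_sum => i; apply: is_cospolyZ.
by apply: is_cospolyW (is_cospoly_exp c0 c1 i); rewrite -ltnS.
Qed.

End CosinePolynomials.

Lemma cgl_nodeE (R : realType) (a b : R) m k :
  cgl_node a b m k = (a + b) / 2 - (b - a) / 2 * cos (k%:R * pi / m%:R).
Proof. rewrite /cgl_node /cheb_tau; lra. Qed.

Lemma cgl_node_itv (R : realType) (a b : R) m k : a <= b -> a <= cgl_node a b m k <= b.
Proof.
move=> ab; rewrite cgl_nodeE.
have := cos_le1 (k%:R * pi / m%:R : R); have := cos_geN1 (k%:R * pi / m%:R : R).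
move=> h1 h2; apply/andP; split; nra.
Qed.

Lemma cgl_node_coarse (R : realType) (a b : R) p q l : (0 < q)%N ->
  cgl_node a b (q * p) (l * q) = cgl_node a b p l.
Proof.
move=> q0; rewrite !cgl_nodeE.
have [->|p0] := posnP p; first by rewrite muln0 !invr0 !mulr0.
by rewrite !natrM; congr (_ - _ * cos _); field; rewrite !pnatr_eq0 -!lt0n q0 p0.
Qed.

Lemma poly_ge_cgl (R : realType) (a b C : R) (p q : nat) (psi : {poly R}) :
  a < b -> (0 < q)%N -> (size psi <= p.+1)%N ->
  (forall k, (k <= q * p)%N -> 0 <= psi.[cgl_node a b (q * p) k]) ->
  (forall l, (l <= p)%N -> psi.[cgl_node a b p l] <= C) ->
  forall t, a <= t <= b ->
  - (pi ^+ 2 * C / 8 * Num.sqrt p%:R * (p%:R / (q * p)%:R) ^+ 2) <= psi.[t].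
Proof.
move=> ab q0 spsi fine coarse t tab.
have [p0|p_gt0] := posnP p.
  move: spsi (fine 0%N (leq0n _)); rewrite p0 => /size1_polyC -> /[!hornerC] psi0.
  by rewrite sqrtr0 !(mulr0, mul0r) oppr0.
set c0 := (a + b) / 2; set c1 := - ((b - a) / 2).
have c1_lt0 : c1 < 0 by rewrite oppr_lt0 divr_gt0 // subr_gt0.
have nodeE m k : cgl_node a b m k = c0 + c1 * cos (k%:R * pi / m%:R).
  by rewrite cgl_nodeE /c0 /c1 mulNr.
have [coef psiE] := is_cospoly_horner c0 c1 spsi.
have x_itv : -1 <= (t - c0) / c1 <= 1.
  rewrite ler_ndivlMr ?ler_ndivrMr //; case/andP: tab => ta tb.
  by apply/andP; split; rewrite /c0 /c1; lra.
have -> : t = c0 + c1 * cos (acos ((t - c0) / c1)).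
  by rewrite acosK ?in_itv //= mulrC divfK ?lt_eqF // addrC subrK.
rewrite psiE; apply: cospoly_ge => //.
- by move=> k km; rewrite -psiE -nodeE; exact: fine.
- by move=> l lp; rewrite -psiE -nodeE; exact: coarse.
- by rewrite acos_ge0 ?acos_lepi.
Qed.

Lemma poly_sub_ge_cgl (R : realType) (a b C : R) (p q : nat) (P Q : {poly R}) :
  a < b -> (0 < q)%N -> (size P <= p.+1)%N -> (size Q <= p.+1)%N ->
  (forall k, (k <= q * p)%N -> Q.[cgl_node a b (q * p) k] <= P.[cgl_node a b (q * p) k]) ->
  (forall l, (l <= p)%N -> P.[cgl_node a b p l] - Q.[cgl_node a b p l] <= C) ->
  forall t, a <= t <= b ->
  Q.[t] - pi ^+ 2 * C / 8 * Num.sqrt p%:R * (p%:R / (q * p)%:R) ^+ 2 <= P.[t].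
Proof.
move=> ab q0 sP sQ fine coarse t tab.
have sPQ : (size (P - Q)%R <= p.+1)%N.
  by rewrite (leq_trans (size_polyD _ _)) // size_polyN geq_max sP sQ.
rewrite -(subrK Q P) hornerD [leLHS]addrC lerD2r.
apply: (poly_ge_cgl ab q0 sPQ _ _ tab) => [k km|l lp]; rewrite hornerD hornerN.
  by rewrite subr_ge0 fine.
exact: coarse.
Qed.

Theorem mainTheorem5 (R : realType) (ti ti1 : R) (p m : nat)
  (phiL phi phiR : {poly R}) (Cbox : R) :
  ti < ti1 ->
  0 < Cbox ->
  (size phiL <= p.+1)%N -> (size phi <= p.+1)%N -> (size phiR <= p.+1)%N ->
  (exists q : nat, (0 < q)%N /\ m = (q * p)%N) ->
  (forall k : nat, (k <= m)%N ->
     phiL.[cgl_node ti ti1 m k] <= phi.[cgl_node ti ti1 m k] /\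
     phi.[cgl_node ti ti1 m k] <= phiR.[cgl_node ti ti1 m k]) ->
  (forall t : R, ti <= t <= ti1 -> phiR.[t] - phiL.[t] <= Cbox) ->
  forall t : R, ti <= t <= ti1 ->
    phiL.[t] - pi ^+ 2 * Cbox / 8 * Num.sqrt (p%:R) * (p%:R / m%:R) ^+ 2
      <= phi.[t] /\
    phi.[t] <= phiR.[t] + pi ^+ 2 * Cbox / 8 * Num.sqrt (p%:R) * (p%:R / m%:R) ^+ 2.
Proof.
move=> tt1 _ sL s sR [q [q0 ->]] fine box t tt.
have coarse l : (l <= p)%N ->
    phiL.[cgl_node ti ti1 p l] <= phi.[cgl_node ti ti1 p l] <= phiR.[cgl_node ti ti1 p l].
  move=> lp; rewrite -(cgl_node_coarse ti ti1 p l q0).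
  have [] // := fine (l * q)%N; first by rewrite mulnC leq_mul2l lp orbT.
  by move=> -> ->.
have boxp l : phiR.[cgl_node ti ti1 p l] - phiL.[cgl_node ti ti1 p l] <= Cbox.
  exact/box/cgl_node_itv/ltW.
split; last rewrite -lerBlDr.
- apply: (poly_sub_ge_cgl tt1 q0 s sL) => // [k /fine[] //|l /coarse/andP[_ le]].
  by apply: le_trans (boxp l); rewrite lerB.
- apply: (poly_sub_ge_cgl tt1 q0 sR s) => // [k /fine[] //|l /coarse/andP[le _]].
  by apply: le_trans (boxp l); rewrite lerB.
Qed.
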